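(* Let $d^{AD}_n$ denote the number of signed derangements $\sigma\in D_n$ with $\ell_D(\sigma)$ even. Then: (i) for $n\ge 2$, $d^{AD}_n=n!\sum_{k=0}^{n-2}\frac{2^{n-k-2}(-1)^k}{k!}+(-1)^{n-1}(n-1)$; (ii) for $n\ge 2$, $d^{AD}_n=2n\,d^{AD}_{n-1}+(-1)^{n-1}(n^2-2n-1)$, with $d^{AD}_1=0$; (iii) for $n\ge 3$, $d^{AD}_n=(2n-1)d^{AD}_{n-1}+2(n-1)d^{AD}_{n-2}+(-1)^{n-1}(2n-3)$, with $d^{AD}_1=0$, $d^{AD}_2=1$.
   Context: $B_n$ is the set of words $\sigma=\sigma_1\cdots\sigma_n$ with $\sigma_i\in\{\pm1,\dots,\pm n\}$ and $|\sigma_1|\cdots|\sigma_n|$ a permutation of $[n]$. $\mathrm{neg}(\sigma)=\#\{i:\sigma_i<0\}$. $D_n=\{\sigma\in B_n:\mathrm{neg}(\sigma)\text{ even}\}$. A derangement is an element with $\sigma_i\neq i$ for all $i$. $\mathrm{inv}(\sigma)=\#\{(i,j):i<j,\sigma_i>\sigma_j\}$ (usual integer order), $\ell_B(\sigma)=\mathrm{inv}(\sigma)-\sum_{i:\sigma_i<0}\sigma_i$, and $\ell_D(\sigma)=\ell_B(\sigma)-\mathrm{neg}(\sigma)$. *)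

From HB Require Import structures.
From mathcomp Require Import all_boot all_order all_algebra all_fingroup.
Set Implicit Arguments. Unset Strict Implicit. Unset Printing Implicit Defensive.
Import Order.TTheory GRing.Theory Num.Theory.
Local Open Scope ring_scope.

(* The word is
   sigma_(i+1) = (if s i then -1 else 1) * (p i + 1), for i : 'I_n. *)
Definition signed_perm (n : nat) : finType :=
  ({perm 'I_n} * {ffun 'I_n -> bool})%type.

Definition sval (n : nat) (s : signed_perm n) (i : 'I_n) : int :=
  if s.2 i then - ((s.1 i).+1%N)%:Z else ((s.1 i).+1%N)%:Z.

Definition negB (n : nat) (s : signed_perm n) : nat :=
  #|[set i : 'I_n | sval s i < 0]|.

Definition invB (n : nat) (s : signed_perm n) : nat :=
  #|[set ij : 'I_n * 'I_n | (ij.1 < ij.2)%N && (sval s ij.2 < sval s ij.1)]|.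

Definition lenB (n : nat) (s : signed_perm n) : int :=
  (invB s)%:Z - \sum_(i : 'I_n | sval s i < 0) sval s i.

Definition lenD (n : nat) (s : signed_perm n) : int :=
  lenB s - (negB s)%:Z.

Definition in_D (n : nat) (s : signed_perm n) : bool := ~~ odd (negB s).

Definition derangement (n : nat) (s : signed_perm n) : bool :=
  [forall i : 'I_n, sval s i != (i.+1%N)%:Z].

Definition dAD (n : nat) : nat :=
  #|[set s : signed_perm n | [&& in_D s, derangement s & (2 %| lenD s)%Z]]|.

From Pilot Require Import Defs.
From HB Require Import structures.
From mathcomp Require Import all_boot all_order all_algebra all_fingroup.
From mathcomp Require Import zify ring lra.
Set Implicit Arguments. Unset Strict Implicit. Unset Printing Implicit Defensive.
Import Order.TTheory GRing.Theory Num.Theory.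
Local Open Scope ring_scope.

(* l_D(s) = inv(s) + sum_(s_i < 0) (|s_i| - 1) exactly, and counting |s_i| - 1
   as #{j | |s_j| < |s_i|} shows, pair of positions by pair of positions, that
   this has the parity of inv(|s|), i.e. of the underlying permutation (whose
   inversion parity is read off a permuted Vandermonde determinant).  Hence
   d^AD_n counts the pairs (p, signs) with p even, an even number of minus
   signs, and a minus sign on every fixed point of p.  Writing each parity
   condition as (1 + (-1)^k)/2 and expanding the sign constraint by
   inclusion-exclusion over fixed points gives
     4 d^AD_n = sum_k C(n,k) (-1)^k 2^(n-k) ((n-k)! + [n-k <= 1]) + 2 (-1)^n,
   from which (i) follows, and (ii), (iii) by algebra. *)

Lemma sign_card (R : pzRingType) (T : finType) (P : pred T) :
  (-1) ^+ #|[set x | P x]| = \prod_x (-1) ^+ P x :> R.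
Proof.
rewrite -sum1_card big_mkcond /= prodrXr; congr (_ ^+ _).
by apply: eq_bigr => x _; rewrite inE; case: (P x).
Qed.

Lemma card_ord_lt n k : (k <= n)%N -> #|[set m : 'I_n | (m < k)%N]| = k.
Proof.
move=> le_kn.
have -> : [set m : 'I_n | (m < k)%N] = widen_ord le_kn @: [set: 'I_k].
  apply/setP => m; rewrite inE; apply/idP/imsetP => [lt_mk | [j _ ->]].
    by exists (Ordinal lt_mk) => //; apply: val_inj.
  exact: (ltn_ord j).
by rewrite card_imset ?cardsT ?card_ord // => a b /(congr1 val) /= eq_ab; apply: val_inj.
Qed.

Lemma card_perm_lt n (p : 'S_n) i : #|[set j | (p j < p i)%N]| = p i.
Proof.
transitivity #|p @^-1: [set m : 'I_n | (m < p i)%N]|.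
  by apply: eq_card => j; rewrite !inE.
by rewrite card_preimset ?card_ord_lt //; [exact: ltnW | exact: perm_inj].
Qed.

Lemma prod_pairs_lt (R : comPzSemiRingType) n (F : 'I_n * 'I_n -> R) :
    (forall i, F (i, i) = 1) ->
  \prod_x F x = \prod_(x : 'I_n * 'I_n | (x.1 < x.2)%N) (F x * F (x.2, x.1)).
Proof.
move=> F_diag; rewrite big_split /= (bigID (fun x : 'I_n * 'I_n => (x.1 < x.2)%N)) /=.
congr (_ * _); rewrite (bigID (fun x : 'I_n * 'I_n => x.1 == x.2)) /= big1 ?mul1r; last first.
  by move=> [i j] /andP[_ /eqP /= ->].
have swap_inj : injective (fun x : 'I_n * 'I_n => (x.2, x.1)) by move=> [a b] [c d] [-> ->].
rewrite (reindex_inj swap_inj) /=; apply: eq_bigl => [[i j]] /=.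
by rewrite -(inj_eq val_inj) /=; case: ltngtP.
Qed.

Definition inversions n (p : 'S_n) : nat :=
  #|[set x : 'I_n * 'I_n | (x.1 < x.2)%N && (p x.2 < p x.1)%N]|.

Lemma vandermonde_prod_perm n (p : 'S_n) :
  \prod_(x : 'I_n * 'I_n | (x.1 < x.2)%N) ((p x.2 : nat)%:R - (p x.1 : nat)%:R : rat) =
  (-1) ^+ p * \prod_(x : 'I_n * 'I_n | (x.1 < x.2)%N) ((x.2 : nat)%:R - (x.1 : nat)%:R).
Proof.
pose a : 'rV[rat]_n := \row_j (j : nat)%:R.
have VpE : Vandermonde n (\row_j (p j : nat)%:R) = col_perm p (Vandermonde n a).
  by apply/matrixP => i j; rewrite !mxE.
have := congr1 determinant VpE.
rewrite col_permE det_mulmx det_perm odd_permV !det_Vandermonde.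
rewrite !(pair_big_dep (@predT 'I_n) (fun i j : 'I_n => (i < j)%N)) /=.
under eq_bigr do rewrite !mxE.
under [X in _ = X * _]eq_bigr do rewrite !mxE.
by move=> ->; rewrite mulrC.
Qed.

Lemma odd_inversions n (p : 'S_n) : odd (inversions p) = odd_perm p.
Proof.
set Q := \prod_(x : 'I_n * 'I_n | (x.1 < x.2)%N) ((x.2 : nat)%:R - (x.1 : nat)%:R : rat).
have Q_gt0 : 0 < Q by apply: prodr_gt0 => x /= lt_x; rewrite subr_gt0 ltr_nat.
have prod_sign_norm :
    \prod_(x : 'I_n * 'I_n | (x.1 < x.2)%N) ((p x.2 : nat)%:R - (p x.1 : nat)%:R : rat)
  = (-1) ^+ inversions p *
    \prod_(x : 'I_n * 'I_n | (x.1 < x.2)%N) `|(p x.2 : nat)%:R - (p x.1 : nat)%:R : rat|.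
  rewrite /inversions sign_card [in RHS](bigID (fun x : 'I_n * 'I_n => (x.1 < x.2)%N)) /=.
  rewrite [X in _ * X * _]big1 ?mulr1; last by move=> x /negbTE ->.
  rewrite -big_split; apply: eq_bigr => x lt_x; rewrite lt_x /=.
  case: (ltngtP (p x.2) (p x.1)) => cmp /=.
  - by rewrite ltr0_norm ?subr_lt0 ?ltr_nat // expr1 mulN1r opprK.
  - by rewrite ger0_norm ?subr_ge0 ?ler_nat ?(ltnW cmp) // expr0 mul1r.
  - by rewrite cmp subrr normr0 mulr0.
have prod_norm :
    \prod_(x : 'I_n * 'I_n | (x.1 < x.2)%N) `|(p x.2 : nat)%:R - (p x.1 : nat)%:R : rat| = Q.
  by rewrite -normr_prod vandermonde_prod_perm normrM normr_sign mul1r gtr0_norm.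
have := vandermonde_prod_perm p; rewrite prod_sign_norm prod_norm -/Q.
by move=> /(mulIf (lt0r_neq0 Q_gt0)); rewrite -signr_odd => /signr_inj.
Qed.

Lemma sval_lt0 n (s : signed_perm n) i : (Defs.sval s i < 0) = s.2 i.
Proof. by rewrite /Defs.sval; case: (s.2 i); rewrite ?oppr_lt0 // ltNge. Qed.

(* For positions i < j with values a = |s_i|, b = |s_j|: whether (i, j) is an
   inversion of s, plus [s_i < 0] [b < a] and [s_j < 0] [a < b], has the parity
   of [b < a]; the two middle terms count (i, j) in sum_(s_k < 0) |s_k| via
   |s_k| = #{l | |s_l| < |s_k|}. *)
Lemma sign_inversion_pair (a b : nat) (u v : bool) : a != b ->
  (-1) ^+ ((if v then - (b.+1)%:Z else (b.+1)%:Z) < (if u then - (a.+1)%:Z else (a.+1)%:Z))%R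
  * ((-1) ^+ (u && (b < a)%N) * (-1) ^+ (v && (a < b)%N)) = (-1) ^+ (b < a)%N :> int.
Proof.
move=> neq_ab.
have ltNN : (- (b.+1)%:Z < - (a.+1)%:Z) = (a < b)%N by apply/idP/idP; lia.
have ltPP : ((b.+1)%:Z < (a.+1)%:Z) = (b < a)%N by apply/idP/idP; lia.
by case: u; case: v => /=; rewrite ?ltNN ?ltPP; case: ltngtP neq_ab => //= _ _;
  rewrite ?expr0 ?expr1 ?mulr1 ?mul1r ?mulrNN.
Qed.

Lemma sign_invB_neg_sum n (s : signed_perm n) :
  (-1) ^+ (invB s + \sum_(i | s.2 i) s.1 i) = (-1) ^+ inversions s.1 :> int.
Proof.
have sign_neg_sum : (-1) ^+ (\sum_(i | s.2 i) s.1 i) =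
    \prod_(x : 'I_n * 'I_n) (-1) ^+ (s.2 x.1 && (s.1 x.2 < s.1 x.1)%N) :> int.
  rewrite -prodrXr -(pair_big xpredT xpredT
    (fun i j => (-1) ^+ (s.2 i && (s.1 j < s.1 i)%N))) /=.
  rewrite big_mkcond; apply: eq_bigr => i _; case: (s.2 i) => /=.
    by rewrite -[in LHS](card_perm_lt s.1 i) sign_card.
  by rewrite big1.
rewrite exprD /invB /inversions !sign_card sign_neg_sum -big_split /=.
rewrite !prod_pairs_lt; try by move=> i /=; rewrite !ltnn ?andbF.
apply: eq_bigr => [[i j]] /= lt_ij.
have -> : (j < i)%N = false by rewrite ltnNge ltnW.
rewrite lt_ij /= expr0 !mulr1.
have neq_ij : s.1 i != s.1 j :> nat.
  rewrite (inj_eq val_inj) (inj_eq (@perm_inj _ s.1)).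
  by apply: contraTneq lt_ij => ->; rewrite ltnn.
by rewrite /Defs.sval -mulrA mul1r; apply: sign_inversion_pair.
Qed.

Lemma lenD_neg_sum n (s : signed_perm n) :
  lenD s = (invB s + \sum_(i | s.2 i) s.1 i)%N%:Z.
Proof.
rewrite /lenD /lenB /negB.
rewrite (eq_bigl (fun i => s.2 i)); last by move=> i; rewrite sval_lt0.
rewrite (eq_bigr (fun i => - ((s.1 i).+1)%N%:Z)); last by move=> i neg_i; rewrite /Defs.sval neg_i.
rewrite (eq_card (B := [set i | s.2 i])); last by move=> i; rewrite !inE sval_lt0.
rewrite -sum1_card sumrN opprK PoszD !(big_morph Posz PoszD (erefl 0%:Z)) /=.
rewrite -addrA; congr (_ + _).
rewrite [X in _ - X](eq_bigl (fun i => s.2 i)); last by move=> i; rewrite inE.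
by rewrite -sumrB; apply: eq_bigr => i _; rewrite -addn1 PoszD; ring.
Qed.

Lemma dvdz2_lenD n (s : signed_perm n) : (2 %| lenD s)%Z = ~~ odd_perm s.1.
Proof.
rewrite lenD_neg_sum /dvdz unfold_in /= dvdn2 -odd_inversions; congr (~~ _).
by apply: (@signr_inj int); rewrite !signr_odd; apply: sign_invB_neg_sum.
Qed.

Lemma sval_neq_pos n (s : signed_perm n) i :
  (Defs.sval s i != (i.+1)%N%:Z) = s.2 i || (s.1 i != i).
Proof.
rewrite /Defs.sval; case: (s.2 i) => /=; first by apply/negP => /eqP; lia.
by rewrite eqz_nat eqSS.
Qed.

Lemma dAD_card_even n : dAD n = #|[set s : signed_perm n |
  [&& ~~ odd #|[set i | s.2 i]|, [forall i, s.2 i || (s.1 i != i)] & ~~ odd_perm s.1]]|.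
Proof.
rewrite /dAD; apply: eq_card => s; rewrite !inE dvdz2_lenD /in_D /negB /derangement.
congr [&& ~~ odd _, _ & _]; first by apply: eq_card => i; rewrite !inE sval_lt0.
by apply: eq_forallb => i; rewrite sval_neq_pos.
Qed.

Lemma natr_card_set (R : pzSemiRingType) (T : finType) (P : pred T) :
  #|[set x | P x]|%:R = \sum_x (P x)%:R :> R.
Proof.
rewrite -sum1_card natr_sum big_mkcond /=; apply: eq_bigr => x _.
by rewrite inE; case: (P x).
Qed.

Lemma natr_forall (R : comPzSemiRingType) (T : finType) (P : pred T) :
  [forall i, P i]%:R = \prod_i (P i)%:R :> R.
Proof.
case: (boolP [forall i, P i]) => [/forallP allP | /forallPn [i /negbTE notPi]].
  by rewrite big1 // => i _; rewrite allP.
by rewrite (bigD1 i) //= notPi mul0r.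
Qed.

Lemma even_indicator_mul4 (a : nat) (B b : bool) :
  [&& ~~ odd a, B & ~~ b]%:R * 4 = (1 + (-1) ^+ a) * (1 + (-1) ^+ b) * B%:R :> rat.
Proof.
by rewrite -signr_odd; case: (odd a); case: B; case: b => /=; rewrite ?expr0 ?expr1; ring.
Qed.

Lemma sum_sign_vectors n (p : 'S_n) :
  \sum_(f : {ffun 'I_n -> bool})
     (1 + (-1) ^+ #|[set i | f i]|) * [forall i, f i || (p i != i)]%:R
  = \prod_i (1 + (p i != i)%:R) + \prod_i ((p i != i)%:R - 1) :> rat.
Proof.
rewrite (eq_bigr (fun f : {ffun 'I_n -> bool} =>
    \prod_i ((f i || (p i != i))%:R : rat)
  + \prod_i ((-1) ^+ f i * (f i || (p i != i))%:R))); last first.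
  by move=> f _; rewrite natr_forall mulrDl mul1r sign_card -big_split.
rewrite big_split /=.
rewrite [X in _ = X + _](eq_bigr (fun i => \sum_(b : bool) ((b || (p i != i))%:R : rat)));
  last by move=> i _; rewrite big_bool /=; case: (p i != i).
rewrite [X in _ = _ + X](eq_bigr (fun i =>
    \sum_(b : bool) ((-1) ^+ b * (b || (p i != i))%:R : rat))); last first.
  by move=> i _; rewrite big_bool /=; case: (p i != i) => /=; rewrite ?expr0 ?expr1; ring.
by rewrite !bigA_distr_bigA.
Qed.

Lemma prod_moved_sub1 n (p : 'S_n) :
  \prod_i ((p i != i)%:R - 1) = (p == 1%g)%:R * (-1) ^+ n :> rat.
Proof.
have [-> | p_neq1] := eqVneq p 1%g.
  rewrite mul1r (eq_bigr (fun _ => -1)) ?prodr_const ?card_ord // => i _.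
  by rewrite perm1 eqxx sub0r.
have [i moved_i] : exists i, p i != i.
  apply/existsP; apply: contraR p_neq1 => /existsPn fixed.
  by apply/eqP/permP => i; rewrite perm1; move: (fixed i); rewrite negbK => /eqP.
by rewrite (bigD1 i) //= moved_i subrr !mul0r.
Qed.

Lemma prod_fixed_perm_on n (p : 'S_n) (J : {set 'I_n}) :
  \prod_(i in J) ((p i == i)%:R : rat) = (perm_on (~: J) p)%:R.
Proof.
case: (boolP (perm_on (~: J) p)) => [onCJ | /subsetPn [i moved_i notCJ_i]].
  apply: big1 => i J_i; suff -> : p i == i by [].
  apply/negPn/negP => moved_i.
  by have := subsetP onCJ i moved_i; rewrite inE J_i.
have J_i : i \in J by move: notCJ_i; rewrite inE negbK.
by rewrite (bigD1 i) //= (negbTE moved_i) mul0r.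
Qed.

Lemma cardsC_ord n (J : {set 'I_n}) : #|~: J| = (n - #|J|)%N.
Proof.
suff : (#|J| + #|~: J| = n)%N by lia.
by rewrite -[RHS](card_ord n) cardsC.
Qed.

Lemma prod_moved_add1 n (p : 'S_n) :
  \prod_i (1 + (p i != i)%:R) =
  \sum_(J : {set 'I_n}) (-1) ^+ #|J| * 2 ^+ (n - #|J|) * (perm_on (~: J) p)%:R :> rat.
Proof.
rewrite (eq_bigr (fun i => - (p i == i)%:R + 2)); last first.
  by move=> i _; case: (p i == i) => /=; ring.
rewrite bigA_distr; apply: eq_bigr => J _.
rewrite (bigID (mem J)) /=.
rewrite (eq_bigr (fun i => - ((p i == i)%:R : rat))); last by move=> i ->.
rewrite prodrN prod_fixed_perm_on.
rewrite (eq_bigr (fun _ => 2)); last by move=> i /negbTE ->.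
rewrite prodr_const.
have -> : #|(fun i : 'I_n => i \notin J)| = (n - #|J|)%N.
  by rewrite -cardsC_ord; apply: eq_card => i; rewrite inE.
by rewrite mulrAC.
Qed.

Lemma sum_subsets_card (R : nmodType) n (H : nat -> R) :
  \sum_(J : {set 'I_n}) H #|J| = \sum_(k < n.+1) H k *+ 'C(n, k).
Proof.
have card_lt (J : {set 'I_n}) : (#|J| < n.+1)%N.
  by rewrite ltnS; apply: leq_trans (max_card _) _; rewrite card_ord.
rewrite (partition_big (fun J : {set 'I_n} => inord #|J| : 'I_n.+1) xpredT) //=.
apply: eq_bigr => k _.
rewrite (eq_bigr (fun _ => H k)) ?sumr_const; last by move=> J /eqP <-; rewrite inordK.
congr (_ *+ _); transitivity #|[set J : {set 'I_n} | #|J| == k]|.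
  by apply: eq_card => J; rewrite unfold_in /= inordK // inE.
by rewrite card_draws card_ord.
Qed.

Lemma sum_sign_perm_on (R : numDomainType) n (A : {set 'I_n}) :
  \sum_(p : 'S_n | perm_on A p) (-1) ^+ p = (#|A| <= 1)%N%:R :> R.
Proof.
have [small_A | big_A] := leqP #|A| 1.
  rewrite (eq_bigl (fun p => p == 1%g)) ?big_pred1_eq ?odd_perm1 //.
  move=> p; apply/idP/eqP => [onA | ->]; last exact: perm_on1.
  apply/permP => i; rewrite perm1; apply/eqP/negPn/negP => moved_i.
  have A_i : i \in A by apply: (subsetP onA); exact: moved_i.
  have A_pi : p i \in A.
    apply: (subsetP onA); rewrite inE; apply: contra moved_i => /eqP fixed.
    by apply/eqP; apply: (@perm_inj _ p).
  have : (#|[set i; p i]| <= #|A|)%N.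
    by apply/subset_leq_card/subsetP => z; rewrite !inE => /orP[] /eqP ->.
  by rewrite cards2 eq_sym moved_i; move: small_A; lia.
case/card_gt1P: big_A => x [y [A_x A_y neq_xy]].
set S := \sum_(p : 'S_n | perm_on A p) (-1) ^+ p.
have on_txy : perm_on A (tperm x y).
  apply: subset_trans (tperm_on x y) _; apply/subsetP => z; rewrite !inE.
  by case/orP => /eqP ->.
have S_opp : S = - S.
  rewrite {1}/S (reindex_inj (mulgI (tperm x y))) /= -sumrN; apply: eq_big => p.
    apply/idP/idP => onA; last exact: perm_onM on_txy onA.
    by rewrite -(mul1g p) -(tperm2 x y) -mulgA; apply: perm_onM on_txy onA.
  by move=> _; rewrite odd_mul_tperm neq_xy /= signrN.
have : S *+ 2 = 0 by rewrite mulr2n {2}S_opp subrr.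
by move/eqP; rewrite mulrn_eq0 => /eqP.
Qed.

Lemma sum_even_perm_on n (A : {set 'I_n}) :
  \sum_(p : 'S_n) (perm_on A p)%:R * (1 + (-1) ^+ p) =
  (#|A|`!)%:R + (#|A| <= 1)%N%:R :> rat.
Proof.
rewrite -card_perm -sum_sign_perm_on -sum1_card natr_sum -big_split /=.
rewrite [RHS]big_mkcond /=; apply: eq_bigr => p _.
by rewrite unfold_in /perm_on; case: (_ \subset A) => /=; rewrite ?mul1r ?mul0r.
Qed.

Lemma dAD_inclusion_exclusion n : (dAD n)%:R * 4 =
  \sum_(k < n.+1) 'C(n, k)%:R *
     ((-1) ^+ k * 2 ^+ (n - k) * (((n - k)`!)%:R + (n - k <= 1)%N%:R))
  + 2 * (-1) ^+ n :> rat.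
Proof.
pose W (k : nat) : rat := (-1) ^+ k * 2 ^+ (n - k).
rewrite dAD_card_even natr_card_set mulr_suml.
under eq_bigr do rewrite even_indicator_mul4.
rewrite -(pair_big xpredT xpredT (fun (p : 'S_n) (f : {ffun 'I_n -> bool}) =>
  (1 + (-1) ^+ #|[set i | f i]|) * (1 + (-1) ^+ odd_perm p) *
  [forall i, f i || (p i != i)]%:R)) /=.
have sum_f (p : 'S_n) : \sum_(f : {ffun 'I_n -> bool})
      (1 + (-1) ^+ #|[set i | f i]|) * (1 + (-1) ^+ odd_perm p) *
      [forall i, f i || (p i != i)]%:R
    = \sum_(J : {set 'I_n}) W #|J| * ((perm_on (~: J) p)%:R * (1 + (-1) ^+ p))
      + (p == 1%g)%:R * ((-1) ^+ n * (1 + (-1) ^+ p)).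
  under eq_bigr do rewrite mulrAC.
  rewrite -mulr_suml sum_sign_vectors prod_moved_sub1 prod_moved_add1.
  rewrite mulrDl mulr_suml -mulrA; congr (_ + _).
  by apply: eq_bigr => J _; rewrite mulrA.
under eq_bigr do rewrite sum_f.
rewrite big_split /= [X in _ + X](bigD1 1%g) //= eqxx mul1r odd_perm1.
rewrite [X in _ + (_ + X)]big1 ?addr0; last by move=> p /negbTE ->; rewrite mul0r.
rewrite exchange_big /=.
under eq_bigr do rewrite -mulr_sumr sum_even_perm_on cardsC_ord.
rewrite (@sum_subsets_card _ n (fun k => W k * (((n - k)`!)%:R + (n - k <= 1)%N%:R))).
congr (_ + _); last by rewrite expr0 mulrC.
by apply: eq_bigr => k _; rewrite mulr_natl.
Qed.

Lemma bin_fact_ratio n k : (k <= n)%N ->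
  'C(n, k)%:R * ((n - k)`!)%:R = (n`!)%:R / (k`!)%:R :> rat.
Proof.
move=> le_kn; have kfact_neq0 : (k`!)%:R != 0 :> rat by rewrite pnatr_eq0 -lt0n fact_gt0.
apply: (mulIf kfact_neq0); rewrite mulfVK // -!natrM; congr (_%:R).
by rewrite -(bin_fact le_kn) mulnA mulnAC.
Qed.

Lemma dAD_closed_form m : (dAD m.+2)%:R = (m.+2`!)%:R *
   (\sum_(0 <= k < m.+1) (2 ^ (m.+2 - k - 2))%:R * (-1) ^+ k / (k`!)%:R)
   + (-1) ^+ m.+1 * (m.+1)%:R :> rat.
Proof.
apply: (mulIf (_ : (4 : rat) != 0)) => //; rewrite dAD_inclusion_exclusion.
rewrite big_ord_recr big_ord_recr /= subnn !subSnn binn binSn big_mkord.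
have main_terms : \sum_(i < m.+1) 'C(m.+2, i)%:R *
     ((-1) ^+ i * 2 ^+ (m.+2 - i) * (((m.+2 - i)`!)%:R + (m.+2 - i <= 1)%N%:R)) =
   (m.+2`!)%:R * (\sum_(i < m.+1) (2 ^ (m.+2 - i - 2))%:R * (-1) ^+ i / (i`!)%:R) * 4 :> rat.
  rewrite mulr_sumr mulr_suml; apply: eq_bigr => i _.
  have le_im : (i <= m)%N by rewrite -ltnS.
  rewrite (_ : (m.+2 - i <= 1)%N = false) ?addr0; last by lia.
  transitivity ('C(m.+2, i)%:R * ((m.+2 - i)`!)%:R * ((-1) ^+ i * 2 ^+ (m.+2 - i)) : rat);
    first by ring.
  rewrite bin_fact_ratio; last by lia.
  have -> : (m.+2 - i = (m.+2 - i - 2).+2)%N by lia.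
  rewrite natrX !exprS; have -> : ((m.+2 - i - 2).+2 - 2 = m.+2 - i - 2)%N by lia.
  by ring.
have -> : (m.+2)%:R = m%:R + 2 :> rat by rewrite -addn2 natrD.
have -> : (m.+1)%:R = m%:R + 1 :> rat by rewrite -addn1 natrD.
by rewrite main_terms !exprS expr0 (_ : 1`! = 1%N) // fact0 /=; ring.
Qed.

Lemma dAD1 : dAD 1 = 0%N.
Proof.
have := dAD_inclusion_exclusion 1.
rewrite !big_ord_recr big_ord0 /= bin0 binn subn0 subnn (_ : 1`! = 1%N) // fact0.
move=> h; apply/eqP; rewrite -(eqr_nat rat) -(inj_eq (mulIf (_ : (4 : rat) != 0))) //.
by rewrite h mul0r expr0 expr1; apply/eqP; ring.
Qed.

Lemma dAD2 : dAD 2 = 1%N.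
Proof. by apply/eqP; rewrite -(eqr_nat rat) dAD_closed_form big_nat1 fact0. Qed.

Lemma dAD_rec_first_order m : (dAD m.+2)%:R = (2 * m.+2)%N%:R * (dAD m.+1)%:R
   + (-1) ^+ m.+1 * ((m.+2 ^ 2)%N%:R - (2 * m.+2)%N%:R - 1) :> rat.
Proof.
case: m => [|m]; first by rewrite dAD2 dAD1 /= expr1; ring.
rewrite !dAD_closed_form big_nat_recr //=.
set S := \sum_(0 <= k < m.+1) (2 ^ (m.+2 - k - 2))%:R * (-1) ^+ k / (k`!)%:R.
have -> : \sum_(0 <= k < m.+1) (2 ^ (m.+3 - k - 2))%:R * (-1) ^+ k / (k`!)%:R = 2 * S.
  rewrite /S mulr_sumr; apply: eq_big_nat => k /andP[_ lt_km].
  have -> : (m.+3 - k - 2 = (m.+2 - k - 2).+1)%N by lia.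
  by rewrite expnS natrM; ring.
have -> : (m.+3 - m.+1 - 2 = 0)%N by lia.
have mfact_neq0 : (m`!)%:R != 0 :> rat by rewrite pnatr_eq0 -lt0n fact_gt0.
have m1_neq0 : (m%:R + 1 : rat) != 0 by rewrite natr1 pnatr_eq0.
rewrite !factS !natrM expn0.
have -> : (m.+3)%:R = m%:R + 3 :> rat by rewrite -addn3 natrD.
have -> : (m.+2)%:R = m%:R + 2 :> rat by rewrite -addn2 natrD.
have -> : (m.+1)%:R = m%:R + 1 :> rat by rewrite -addn1 natrD.
rewrite !exprS.
by field; rewrite mfact_neq0 m1_neq0.
Qed.

Lemma dAD_rec_second_order m : (dAD m.+3)%:R = (2 * m.+3 - 1)%N%:R * (dAD m.+2)%:R
   + (2 * (m.+3 - 1))%N%:R * (dAD m.+1)%:R + (-1) ^+ m.+2 * (2 * m.+3 - 3)%N%:R :> rat.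
Proof.
rewrite (dAD_rec_first_order m.+1) (dAD_rec_first_order m).
have -> : (2 * m.+3 - 1 = 2 * m + 5)%N by lia.
have -> : (2 * (m.+3 - 1) = 2 * m + 4)%N by lia.
have -> : (2 * m.+3 - 3 = 2 * m + 3)%N by lia.
rewrite !natrD !natrM ?natrX.
have -> : (m.+3)%:R = m%:R + 3 :> rat by rewrite -addn3 natrD.
have -> : (m.+2)%:R = m%:R + 2 :> rat by rewrite -addn2 natrD.
by rewrite !exprS; ring.
Qed.

Theorem theorem1p3 :
  (forall n : nat, (2 <= n)%N ->
     (dAD n)%:R =
       (n`!)%:R * (\sum_(0 <= k < n.-1) (2 ^ (n - k - 2))%:R * (-1) ^+ k / (k`!)%:R)
       + (-1) ^+ n.-1 * (n.-1)%:R :> rat)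
  /\ (dAD 1 = 0%N /\
      forall n : nat, (2 <= n)%N ->
        (dAD n)%:Z = (2 * n)%:Z * (dAD n.-1)%:Z
                     + (-1) ^+ n.-1 * ((n ^ 2)%:Z - (2 * n)%:Z - 1))
  /\ (dAD 1 = 0%N /\ dAD 2 = 1%N /\
      forall n : nat, (3 <= n)%N ->
        (dAD n)%:Z = (2 * n - 1)%:Z * (dAD n.-1)%:Z
                     + (2 * (n - 1))%:Z * (dAD n.-2)%:Z
                     + (-1) ^+ n.-1 * (2 * n - 3)%:Z).
Proof.
split; first by case=> [|[|m]] // _; apply: dAD_closed_form.
split; split; try exact: dAD1.
  case=> [|[|m]] // _; apply: (@intr_inj rat).
  rewrite !(rmorphD, rmorphM, rmorphB, rmorphXn, rmorphN1, rmorphN, rmorph1).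
  exact: dAD_rec_first_order.
split; first exact: dAD2.
move=> n n_ge3; have [m ->] : exists m, n = m.+3 by exists (n - 3)%N; lia.
apply: (@intr_inj rat); rewrite (_ : (-1) ^+ m.+3.-1 = (-1) ^+ m.+2 :> int) //.
set sign := (-1) ^+ m.+2 : int.
by rewrite !intrD 3!intrM /sign rmorphXn rmorphN1; apply: dAD_rec_second_order.
Qed.
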